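(* Let $G$ be a finite abelian group and let $f$ be an automorphism of the monoid $\mathcal{P}_{0}(G)$. If $H$ is a subgroup of $G$, then $f(H)$ is a subgroup of $G$ as well and $|f(H)|=|H|$.
   Context: For an additively written finite abelian group $G$, $\mathcal{P}_{0}(G)$ is the monoid of all subsets of $G$ containing $0$, with setwise addition $X+Y=\{x+y : x\in X, y\in Y\}$ and identity $\{0\}$. *)

From HB Require Import structures.
From mathcomp Require Import all_boot all_order all_algebra all_fingroup.
Set Implicit Arguments. Unset Strict Implicit. Unset Printing Implicit Defensive.
Import GRing.Theory.
Local Open Scope ring_scope.

Section P0.
Variable G : finZmodType.

Definition setadd (X Y : {set G}) : {set G} := [set x + y | x in X, y in Y].

Definition inP0 (X : {set G}) : bool := 0 \in X.

(* f : {set G} -> {set G} restricts to an automorphism of the monoid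
   (P_0(G), setadd, {0}); values of f outside P_0(G) are irrelevant. *)
Definition P0_automorphism (f : {set G} -> {set G}) : Prop :=
  [/\ (forall X, inP0 X -> inP0 (f X)),
      (forall X Y, inP0 X -> inP0 Y -> f X = f Y -> X = Y),
      (forall Y, inP0 Y -> exists2 X, inP0 X & f X = Y),
      f [set 0] = [set 0]
    & (forall X Y, inP0 X -> inP0 Y -> f (setadd X Y) = setadd (f X) (f Y))].
End P0.

From HB Require Import structures.
From mathcomp Require Import all_boot all_order all_algebra all_fingroup.

(* In a finite group, a set containing 0 is a subgroup exactly when it is an
   idempotent of P_0(G), and idempotents are preserved by monoid
   automorphisms.  The size of an idempotent K is recovered from the monoid
   structure alone: the X in P_0(G) with X + K = K are the subsets of K
   containing 0, and there are 2^(|K| - 1) of them.  An automorphism maps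
   these absorbers of K bijectively onto those of f(K), so |f(K)| = |K|. *)

Set Implicit Arguments. Unset Strict Implicit. Unset Printing Implicit Defensive.
Import GRing.Theory.
Local Open Scope ring_scope.

Section SetAdd.
Variable G : finZmodType.
Implicit Types X Y K : {set G}.

Lemma setaddP X Y z :
  reflect (exists x y, [/\ x \in X, y \in Y & z = x + y]) (z \in setadd X Y).
Proof.
apply: (iffP imset2P) => [[x y hx hy ->]|[x [y [hx hy ->]]]].
  by exists x, y.
by exists x y.
Qed.

Lemma mem_setadd X Y x y : x \in X -> y \in Y -> x + y \in setadd X Y.
Proof. by move=> hx hy; apply/setaddP; exists x, y. Qed.

Lemma inP0_setadd X Y : inP0 X -> inP0 Y -> inP0 (setadd X Y).
Proof. by move=> X0 Y0; rewrite /inP0 -[0]addr0 mem_setadd. Qed.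

Lemma setadd0l Y X : 0 \in X -> Y \subset setadd X Y.
Proof. by move=> X0; apply/subsetP => y hy; rewrite -[y]add0r mem_setadd. Qed.

Lemma setadd0r X Y : 0 \in Y -> X \subset setadd X Y.
Proof. by move=> Y0; apply/subsetP => x hx; rewrite -[x]addr0 mem_setadd. Qed.

Lemma setadd_group (H : {group G}) : setadd H H = H.
Proof.
apply/eqP; rewrite eqEsubset setadd0l ?group1 // andbT.
by apply/subsetP => _ /setaddP[x [y [hx hy ->]]]; apply: (@groupM _ H).
Qed.

Lemma group_set_setadd K : 0 \in K -> setadd K K = K -> group_set K.
Proof.
move=> K0 KK; apply/andP; split=> //.
by apply/subsetP => _ /imset2P[x y hx hy ->]; rewrite -KK mem_setadd.
Qed.

Lemma setadd_idem_eq_subset K X : 0 \in K -> setadd K K = K -> 0 \in X ->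
  (setadd X K == K) = (X \subset K).
Proof.
move=> K0 KK X0; apply/idP/idP => [/eqP <-|sXK]; first exact: setadd0r.
rewrite eqEsubset setadd0l // andbT.
apply/subsetP => _ /setaddP[x [y [hx hy ->]]].
by rewrite -KK mem_setadd // (subsetP sXK).
Qed.

Definition absorbers K := [set X | inP0 X && (setadd X K == K)].

Lemma absorbersP K X : reflect (inP0 X /\ setadd X K = K) (X \in absorbers K).
Proof. by rewrite inE; apply: (iffP andP) => -[X0 /eqP]. Qed.

Lemma absorbersE K : 0 \in K -> setadd K K = K ->
  absorbers K = [set 0 |: Y | Y in powerset (K :\ 0)].
Proof.
move=> K0 KK; apply/setP => X; rewrite !inE /inP0.
apply/idP/imsetP => [/andP[X0 XK]|[Y]].
  exists (X :\ 0); last by rewrite setD1K.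
  by rewrite inE setSD // -setadd_idem_eq_subset.
rewrite inE => sYK ->; rewrite setU11 setadd_idem_eq_subset ?setU11 //.
by rewrite subUset sub1set K0 (subset_trans sYK) ?subsetDl.
Qed.

Lemma card_absorbers K : 0 \in K -> setadd K K = K ->
  #|absorbers K| = expn 2 #|K :\ 0|.
Proof.
move=> K0 KK; rewrite absorbersE // card_in_imset ?card_powerset //.
have notin0 Y : Y \in powerset (K :\ 0) -> 0 \notin Y.
  by rewrite inE => /subsetP sYK; apply/negP => /sYK; rewrite !inE eqxx.
move=> Y1 Y2 /notin0 Y10 /notin0 Y20 eqY.
by rewrite -(setU1K Y10) eqY setU1K.
Qed.

End SetAdd.

Section Automorphism.
Variables (G : finZmodType) (f : {set G} -> {set G}).
Hypothesis hf : P0_automorphism f.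

Lemma P0_aut_idem (K : {set G}) : inP0 K -> setadd K K = K ->
  setadd (f K) (f K) = f K.
Proof. by case: hf => _ _ _ _ fadd K0 KK; rewrite -fadd // KK. Qed.

Lemma P0_aut_absorbers (K : {set G}) : inP0 K ->
  absorbers (f K) = f @: absorbers K.
Proof.
case: hf => fP0 finj fsurj _ fadd K0; apply/setP => Y.
apply/absorbersP/imsetP => [[Y0 YK]|[X /absorbersP[X0 XK] ->]].
  have [X X0 fXY] := fsurj Y Y0; exists X => //.
  apply/absorbersP; split=> //; apply: finj; rewrite ?inP0_setadd ?fadd ?fXY //.
by rewrite fP0 // -fadd // XK.
Qed.

Lemma card_P0_aut_absorbers (K : {set G}) : inP0 K ->
  #|absorbers (f K)| = #|absorbers K|.
Proof.
case: hf => _ finj _ _ _ K0; rewrite P0_aut_absorbers // card_in_imset //.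
by move=> X1 X2 /absorbersP[X10 _] /absorbersP[X20 _]; apply: finj.
Qed.

End Automorphism.

Theorem lemma2p1 (G : finZmodType) (f : {set G} -> {set G})
  (hf : P0_automorphism f) (H : {group G}) :
  group_set (f H) /\ #|f H| = #|H|.
Proof.
have H0 : 0 \in (H : {set G}) := group1 H.
have fH0 : 0 \in f H by case: hf => fP0 _ _ _ _; apply: fP0.
have fHH := P0_aut_idem hf H0 (setadd_group H).
split; first exact: group_set_setadd.
have := card_P0_aut_absorbers hf H0.
rewrite !card_absorbers ?setadd_group // => /eqP; rewrite eqn_exp2l // => /eqP.
by rewrite (cardsD1 0 (f H)) (cardsD1 0 (H : {set G})) fH0 H0 => ->.
Qed.
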